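(* Let $k,\ell,n,p$ be positive integers, and let $C\in\mathbb{R}^{k\times \ell}$, $A\in\mathbb{R}^{n\times p}$, $M\in\mathbb{R}^{k\times k}$ symmetric positive semidefinite, and $B\in\mathbb{R}^{k\times n}$ injective. Let $(u,y)\in\mathbb{R}^k\times\mathbb{R}^n$ and $q,s\in\mathbb{R}^\ell_{++}$, $w,r\in\mathbb{R}^p_{++}$ (vectors with strictly positive entries), and set $Q=\mathrm{diag}(q)$, $S=\mathrm{diag}(s)$, $W=\mathrm{diag}(w)$, $R=\mathrm{diag}(r)$. Consider the square matrix \[ F^{(1)}=\begin{bmatrix} 0&0&-C^T&0&-I&0\\ 0&0&0&-A^T&0&-I\\ C&0&M&-B&0&0\\ 0&A&B^T&0&0&0\\ Q&0&0&0&S&0\\ 0&W&0&0&0&R \end{bmatrix} \] (acting on vectors ordered as $(q,w,u,y,s,r)$). Then $F^{(1)}$ is invertible if and only if the matrix \[ \begin{bmatrix} M+CSQ^{-1}C^T & -B\\ B^T & ARW^{-1}A^T\end{bmatrix} \] is invertible, and this in turn holds if and only if $\mathrm{null}(M)\cap\mathrm{null}(B^T)\cap\mathrm{null}(C^T)=\{0\}$.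
   Context: $F^{(1)}$ is the Jacobian of the relaxed KKT map $F_\mu(q,w,u,y,s,r)=(C^Tu+s-c,\;A^Ty+r-a,\;Mu+Cq-By-b,\;B^Tu+Aw,\;Qs-\mu\mathbf{1},\;Wr-\mu\mathbf{1})$ for the problem of minimizing $\rho(y)=\sup_{C^Tu\le c}\{\langle u,b+By\rangle-\tfrac12\langle u,Mu\rangle\}$ subject to $A^Ty\le a$. $\mathrm{null}(\cdot)$ denotes the null space. *)

From HB Require Import structures.
From mathcomp Require Import all_boot all_order all_algebra.
Set Implicit Arguments. Unset Strict Implicit. Unset Printing Implicit Defensive.
Import Order.TTheory GRing.Theory Num.Theory.
Local Open Scope ring_scope.

(* The Jacobian F^(1), acting on vectors ordered (q, w, u, y, s, r) of sizes
   (l, p, k, n, l, p).  Q S W R are the diagonal matrices diag(q) etc. *)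
Definition F1 (R : realFieldType) (k l n p : nat)
  (C : 'M[R]_(k, l)) (A : 'M[R]_(n, p)) (M : 'M[R]_k) (B : 'M[R]_(k, n))
  (Q S : 'M[R]_l) (W Rr : 'M[R]_p) : 'M[R]_(l + p + k + n + l + p) :=
  col_mx (col_mx (col_mx (col_mx (col_mx
    (row_mx (row_mx (row_mx (row_mx (row_mx (0 : 'M_(l, l)) (0 : 'M_(l, p))) (- C^T)) (0 : 'M_(l, n))) (- 1%:M)) (0 : 'M_(l, p)))
    (row_mx (row_mx (row_mx (row_mx (row_mx (0 : 'M_(p, l)) (0 : 'M_(p, p))) (0 : 'M_(p, k))) (- A^T)) (0 : 'M_(p, l))) (- 1%:M)))
    (row_mx (row_mx (row_mx (row_mx (row_mx C (0 : 'M_(k, p))) M) (- B)) (0 : 'M_(k, l))) (0 : 'M_(k, p))))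
    (row_mx (row_mx (row_mx (row_mx (row_mx (0 : 'M_(n, l)) A) B^T) (0 : 'M_(n, n))) (0 : 'M_(n, l))) (0 : 'M_(n, p))))
    (row_mx (row_mx (row_mx (row_mx (row_mx Q (0 : 'M_(l, p))) (0 : 'M_(l, k))) (0 : 'M_(l, n))) S) (0 : 'M_(l, p))))
    (row_mx (row_mx (row_mx (row_mx (row_mx (0 : 'M_(p, l)) W) (0 : 'M_(p, k))) (0 : 'M_(p, n))) (0 : 'M_(p, l))) Rr).

Definition Fred (R : realFieldType) (k l n p : nat)
  (C : 'M[R]_(k, l)) (A : 'M[R]_(n, p)) (M : 'M[R]_k) (B : 'M[R]_(k, n))
  (Q S : 'M[R]_l) (W Rr : 'M[R]_p) : 'M[R]_(k + n) :=
  block_mx (M + C *m S *m invmx Q *m C^T) (- B)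
           B^T (A *m Rr *m invmx W *m A^T).

(* Nonsingularity of both matrices is triviality of their kernels.  The last
   two block rows of F^(1) express q, w through s, r, and the first two express
   s, r through u, y; what remains is the reduced system with the positive
   diagonal weights Q^-1 S and W^-1 R.  On a kernel vector (u, y) of the reduced
   matrix the skew blocks -B, B^T drop out of the quadratic form, which splits
   into the nonnegative terms u^T M u, (C^T u)^T Q^-1 S (C^T u) and
   (A^T y)^T W^-1 R (A^T y).  All three vanish, so M u = C^T u = A^T y = 0;
   then B y = 0 forces y = 0, and B^T u = 0 puts u in the common null space. *)

From HB Require Import structures.
From mathcomp Require Import all_boot all_order all_algebra.
From mathcomp Require Import ring lra.
Import Order.TTheory GRing.Theory Num.Theory.
Set Implicit Arguments. Unset Strict Implicit. Unset Printing Implicit Defensive.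
Local Open Scope ring_scope.

Lemma unitmx_kerP (F : fieldType) n (A : 'M[F]_n) :
  A \in unitmx <-> (forall x : 'cV_n, A *m x = 0 -> x = 0).
Proof.
split=> [uA x Ax|Ainj]; first by rewrite -(mulKmx uA x) Ax mulmx0.
rewrite -unitmx_tr -row_free_unit; apply: inj_row_free => v vA0.
by rewrite -[v]trmxK (Ainj v^T) ?trmx0 // -[_ *m _]trmxK trmx_mul trmxK vA0 trmx0.
Qed.

Lemma trmx11 (F : pzSemiRingType) (a : 'M[F]_1) : a^T = a.
Proof. by apply/matrixP => i j; rewrite !ord1 mxE. Qed.

Section QuadraticForms.
Variable F : realFieldType.

Definition posdef_mx m (D : 'M[F]_m) :=
  forall z : 'cV[F]_m, z != 0 -> 0 < (z^T *m D *m z) 0 0.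

Lemma posdef_quad_ge0 m (D : 'M[F]_m) (z : 'cV[F]_m) :
  posdef_mx D -> 0 <= (z^T *m D *m z) 0 0.
Proof.
move=> hD; have [->|/hD/ltW//] := eqVneq z 0.
by rewrite mulmx0 mxE.
Qed.

Lemma posdef_quad_eq0 m (D : 'M[F]_m) (z : 'cV[F]_m) :
  posdef_mx D -> (z^T *m D *m z) 0 0 = 0 -> z = 0.
Proof. by move=> hD; have [//|/hD/gt_eqF/eqP] := eqVneq z 0. Qed.

Lemma diag_mx_posdef m (d : 'rV[F]_m) :
  (forall i, 0 < d 0 i) -> posdef_mx (diag_mx d).
Proof.
move=> hd z nz0.
have -> : (z^T *m diag_mx d *m z) 0 0 = \sum_i d 0 i * z i 0 ^+ 2.
  rewrite -mulmxA mul_diag_mx mxE; apply: eq_bigr => i _.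
  by rewrite !mxE expr2 mulrCA mulrA.
have [i zi0] : exists i, z i 0 != 0.
  apply/existsP; apply: contraNT nz0 => /existsPn z0.
  by apply/eqP/matrixP => i j; rewrite ord1 mxE; apply/eqP/negbNE.
rewrite (bigD1 i) //= ltr_pwDl //.
  by rewrite mulr_gt0 // exprn_even_gt0 ?zi0 ?orbT.
by rewrite sumr_ge0 // => j _; rewrite mulr_ge0 ?sqr_ge0 // ltW.
Qed.

Lemma linear_coef_eq0 (b c : F) :
  0 <= c -> (forall t, 0 <= t * b + t ^+ 2 * c) -> b = 0.
Proof.
move=> c0 hq; have c1 : c + 1 != 0 by rewrite gt_eqF // ltr_wpDl.
(* at t = -b/(c+1) the quadratic takes the value -(b/(c+1))^2 *)
have := hq (- b / (c + 1)).
have -> : - b / (c + 1) * b + (- b / (c + 1)) ^+ 2 * c = - (b / (c + 1)) ^+ 2.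
  by field.
rewrite oppr_ge0 => sq_le0.
have /eqP : (b / (c + 1)) ^+ 2 = 0 by apply/le_anti; rewrite sq_le0 sqr_ge0.
by rewrite sqrf_eq0 mulf_eq0 invr_eq0 (negPf c1) orbF => /eqP.
Qed.

Lemma psd_quad_eq0 k (M : 'M[F]_k) (v : 'cV_k) :
  M^T = M -> (forall x : 'cV[F]_k, 0 <= (x^T *m M *m x) 0 0) ->
  (v^T *m M *m v) 0 0 = 0 -> M *m v = 0.
Proof.
move=> Msym Mpsd v0; set x := M *m v.
have cross : v^T *m M *m x = x^T *m M *m v.
  by rewrite -[LHS]trmx11 !trmx_mul trmxK Msym mulmxA.
have lin0 : (x^T *m M *m v) 0 0 = 0.
  apply: (@linear_coef_eq0 _ ((x^T *m M *m x) 0 0 / 2)) => [|t].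
    by rewrite divr_ge0.
  have := Mpsd (v + t *: x).
  rewrite [(v + _)^T]linearD /= linearZ /= !mulmxDl !mulmxDr -!scalemxAl -!scalemxAr.
  rewrite cross !scalerA; move: v0; move: (v^T *m M *m v) (x^T *m M *m v).
  by move: (x^T *m M *m x) => c a b a0; rewrite !mxE a0 expr2; lra.
apply: (@posdef_quad_eq0 _ (diag_mx (const_mx 1))).
  by apply: diag_mx_posdef => i; rewrite mxE.
by rewrite diag_const_mx mulmx1 -lin0 /x trmx_mul Msym !mulmxA.
Qed.

End QuadraticForms.

Section ReducedSystem.
Variables (F : realFieldType) (k l n p : nat).
Variables (C : 'M[F]_(k, l)) (A : 'M[F]_(n, p)) (M : 'M[F]_k) (B : 'M[F]_(k, n)).
Hypothesis Msym : M^T = M.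
Hypothesis Mpsd : forall v : 'cV[F]_k, 0 <= (v^T *m M *m v) 0 0.
Hypothesis Binj : injective (fun x : 'cV[F]_n => B *m x).

Definition null_meet_trivial :=
  forall v : 'cV[F]_k, M *m v = 0 -> B^T *m v = 0 -> C^T *m v = 0 -> v = 0.

Definition reduced_mx (D1 : 'M[F]_l) (D2 : 'M[F]_p) : 'M[F]_(k + n) :=
  block_mx (M + C *m D1 *m C^T) (- B) B^T (A *m D2 *m A^T).

Lemma reduced_mx_quad D1 D2 (v : 'cV[F]_k) (z : 'cV[F]_n) :
  (col_mx v z)^T *m reduced_mx D1 D2 *m col_mx v z =
  v^T *m M *m v + (C^T *m v)^T *m D1 *m (C^T *m v)
                + (A^T *m z)^T *m D2 *m (A^T *m z).
Proof.
have skew : v^T *m (- B) *m z + z^T *m B^T *m v = 0.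
  by rewrite mulmxN mulNmx -[z^T *m _ *m _]trmx11 !trmx_mul !trmxK mulmxA addNr.
rewrite tr_col_mx -mulmxA mul_block_col mul_row_col !mulmxDr !mulmxA.
rewrite mulmxDr mulmxDl !trmx_mul !trmxK !mulmxA.
by rewrite -[LHS]addrA [X in _ + X]addrA skew add0r.
Qed.

Section PositiveDefiniteWeights.
Variables (D1 : 'M[F]_l) (D2 : 'M[F]_p).
Hypotheses (D1pd : posdef_mx D1) (D2pd : posdef_mx D2).

Lemma reduced_mx_kernel (v : 'cV[F]_k) (z : 'cV[F]_n) :
  null_meet_trivial -> reduced_mx D1 D2 *m col_mx v z = 0 -> v = 0 /\ z = 0.
Proof.
move=> meet0 Kx0.
set a := v^T *m M *m v; set b := (C^T *m v)^T *m D1 *m (C^T *m v).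
set c := (A^T *m z)^T *m D2 *m (A^T *m z).
have [a0 b0 c0] : [/\ a 0 0 = 0, b 0 0 = 0 & c 0 0 = 0].
  have := congr1 (fun X => (col_mx v z)^T *m X) Kx0.
  rewrite /= mulmx0 mulmxA reduced_mx_quad -/a -/b -/c.
  have := Mpsd v; have := posdef_quad_ge0 (C^T *m v) D1pd.
  have := posdef_quad_ge0 (A^T *m z) D2pd; rewrite -/a -/b -/c.
  move: a b c => a b c c_ge0 b_ge0 a_ge0 /matrixP/(_ 0 0); rewrite !mxE.
  by split; lra.
have Mv0 : M *m v = 0 by apply: psd_quad_eq0.
have Cv0 : C^T *m v = 0 by apply: (posdef_quad_eq0 D1pd).
have Az0 : A^T *m z = 0 by apply: (posdef_quad_eq0 D2pd).
move: Kx0; rewrite mul_block_col -col_mx0 => /eq_col_mx[].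
rewrite mulmxDl Mv0 -!mulmxA Cv0 Az0 !mulmx0 add0r addr0 add0r mulNmx => /eqP.
rewrite oppr_eq0 => /eqP Bz0 Bv0.
have z0 : z = 0 by apply: Binj; rewrite /= Bz0 mulmx0.
by split=> //; apply: meet0.
Qed.

Lemma reduced_mx_unitP : reduced_mx D1 D2 \in unitmx <-> null_meet_trivial.
Proof.
split=> [/unitmx_kerP Kinj v Mv0 Bv0 Cv0 | meet0].
  have /eqP : col_mx v (0 : 'cV_n) = 0.
    apply: Kinj; rewrite mul_block_col !mulmx0 !addr0 mulmxDl Mv0 -!mulmxA Cv0.
    by rewrite !mulmx0 add0r Bv0 col_mx0.
  by rewrite col_mx_eq0 => /andP[/eqP].
apply/unitmx_kerP => x; rewrite -[x]vsubmxK => /(reduced_mx_kernel meet0)[-> ->].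
exact: col_mx0.
Qed.

End PositiveDefiniteWeights.

Lemma F1_unitP (Q S : 'M[F]_l) (W Rr : 'M[F]_p) :
  Q \in unitmx -> W \in unitmx ->
  posdef_mx (invmx Q *m S) -> posdef_mx (invmx W *m Rr) ->
  F1 C A M B Q S W Rr \in unitmx <-> null_meet_trivial.
Proof.
move=> uQ uW D1pd D2pd; split=> [/unitmx_kerP Finj v Mv0 Bv0 Cv0 | meet0].
  have := Finj (col_mx (col_mx (col_mx (col_mx (col_mx 0 0) v) 0) 0) 0).
  rewrite /F1 !mul_col_mx !mul_row_col !mulmx0 !mul0mx !mulNmx Mv0 Bv0 Cv0.
  rewrite !(oppr0, addr0, add0r) !col_mx0 => /(_ erefl) /eqP.
  by rewrite !col_mx_eq0 => /andP[/andP[/andP[/andP[_ /eqP]]]].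
apply/unitmx_kerP => x.
rewrite -[x]vsubmxK -[usubmx x]vsubmxK -[usubmx (usubmx x)]vsubmxK.
rewrite -[usubmx (usubmx (usubmx x))]vsubmxK.
rewrite -[usubmx (usubmx (usubmx (usubmx x)))]vsubmxK.
set x1 := usubmx (usubmx _).
set x2 := dsubmx (usubmx (usubmx (usubmx (usubmx x)))).
set x3 := dsubmx (usubmx (usubmx (usubmx x))); set x4 := dsubmx (usubmx (usubmx x)).
set x5 := dsubmx (usubmx x); set x6 := dsubmx x.
rewrite /F1 !mul_col_mx !mul_row_col !mul0mx !mulNmx !mul1mx !(addr0, add0r).
move=> /eqP; rewrite !col_mx_eq0.
move=> /andP[/andP[/andP[/andP[/andP[/eqP e1 /eqP e2] /eqP e3] /eqP e4] /eqP e5] /eqP e6].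
have x5E : x5 = - (C^T *m x3) by rewrite (subr0_eq e1).
have x6E : x6 = - (A^T *m x4) by rewrite (subr0_eq e2).
have x1E : x1 = invmx Q *m S *m C^T *m x3.
  by rewrite -(mulKmx uQ x1) -[Q *m x1]opprK (addr0_eq e5) x5E !mulmxN opprK !mulmxA.
have x2E : x2 = invmx W *m Rr *m A^T *m x4.
  by rewrite -(mulKmx uW x2) -[W *m x2]opprK (addr0_eq e6) x6E !mulmxN opprK !mulmxA.
have [x3_0 x4_0] : x3 = 0 /\ x4 = 0.
  apply: (reduced_mx_kernel D1pd D2pd meet0).
  rewrite mul_block_col -col_mx0 -e3 -e4 x1E x2E mulmxDl mulNmx !mulmxA.
  by rewrite (addrC (M *m x3)) (addrC (B^T *m x3)); congr col_mx.
by rewrite x1E x2E x5E x6E x3_0 x4_0 !mulmx0 !oppr0 !col_mx0.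
Qed.

End ReducedSystem.

Lemma diag_mx_unit (F : fieldType) m (d : 'rV[F]_m) :
  (forall i, d 0 i != 0) -> diag_mx d \in unitmx.
Proof. by move=> d_neq0; rewrite unitmxE det_diag unitfE; apply/prodf_neq0. Qed.

Lemma invmx_diag (F : fieldType) m (d : 'rV[F]_m) :
  (forall i, d 0 i != 0) -> invmx (diag_mx d) = diag_mx (\row_i (d 0 i)^-1).
Proof.
move=> d_neq0; have dV : diag_mx d *m diag_mx (\row_i (d 0 i)^-1) = 1%:M.
  rewrite mulmx_diag -diag_const_mx; congr diag_mx.
  by apply/rowP => i; rewrite !mxE mulfV.
by rewrite -[invmx _]mulmx1 -dV mulmxA mulVmx ?mul1mx ?diag_mx_unit.
Qed.

Lemma invmx_diag_mul_posdef (F : realFieldType) m (a b : 'rV[F]_m) :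
  (forall i, 0 < a 0 i) -> (forall i, 0 < b 0 i) ->
  posdef_mx (invmx (diag_mx a) *m diag_mx b).
Proof.
move=> a_gt0 b_gt0; rewrite invmx_diag => [|i]; last by rewrite gt_eqF.
by rewrite mulmx_diag; apply: diag_mx_posdef => i; rewrite !mxE mulr_gt0 ?invr_gt0.
Qed.

Theorem theorem5p2 (R : realFieldType) (k l n p : nat)
  (hk : (0 < k)%N) (hl : (0 < l)%N) (hn : (0 < n)%N) (hp : (0 < p)%N)
  (C : 'M[R]_(k, l)) (A : 'M[R]_(n, p)) (M : 'M[R]_k) (B : 'M[R]_(k, n))
  (u : 'cV[R]_k) (y : 'cV[R]_n)
  (q s : 'cV[R]_l) (w r : 'cV[R]_p)
  (hMsym : M^T = M)
  (hMpsd : forall v : 'cV[R]_k, 0 <= (v^T *m M *m v) 0 0)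
  (hBinj : injective (fun x : 'cV[R]_n => B *m x))
  (hq : forall i, 0 < q i 0) (hs : forall i, 0 < s i 0)
  (hw : forall i, 0 < w i 0) (hr : forall i, 0 < r i 0) :
  let Q := diag_mx q^T in let S := diag_mx s^T in
  let W := diag_mx w^T in let Rr := diag_mx r^T in
  (F1 C A M B Q S W Rr \in unitmx <-> Fred C A M B Q S W Rr \in unitmx) /\
  (Fred C A M B Q S W Rr \in unitmx <->
     (forall v : 'cV[R]_k, M *m v = 0 -> B^T *m v = 0 -> C^T *m v = 0 -> v = 0)).
Proof.
move=> Q S W Rr.
have tr_gt0 m (c : 'cV[R]_m) : (forall i, 0 < c i 0) -> forall i, 0 < c^T 0 i.
  by move=> c_gt0 i; rewrite mxE.
have tr_neq0 m (c : 'cV[R]_m) : (forall i, 0 < c i 0) -> forall i, c^T 0 i != 0.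
  by move=> c_gt0 i; rewrite gt_eqF ?tr_gt0.
have SQ : S *m invmx Q = invmx Q *m S.
  by rewrite invmx_diag; [exact: diag_mxC | exact: tr_neq0].
have RW : Rr *m invmx W = invmx W *m Rr.
  by rewrite invmx_diag; [exact: diag_mxC | exact: tr_neq0].
have -> : Fred C A M B Q S W Rr = reduced_mx C A M B (invmx Q *m S) (invmx W *m Rr).
  by rewrite /Fred -(mulmxA C) SQ -(mulmxA A) RW.
have D1pd := invmx_diag_mul_posdef (tr_gt0 _ _ hq) (tr_gt0 _ _ hs).
have D2pd := invmx_diag_mul_posdef (tr_gt0 _ _ hw) (tr_gt0 _ _ hr).
have uQ : Q \in unitmx by apply/diag_mx_unit/tr_neq0.
have uW : W \in unitmx by apply/diag_mx_unit/tr_neq0.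
have F1P := F1_unitP C A hMsym hMpsd hBinj uQ uW D1pd D2pd.
have FredP := reduced_mx_unitP C A hMsym hMpsd hBinj D1pd D2pd.
by split; [apply: iff_trans F1P (iff_sym FredP) | apply: FredP].
Qed.
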